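(* Let $p$ and $\ell$ be positive integers, let $\bar J_1,\dots,\bar J_p\in\mathcal{E}^+(X)$, and let $\bar J(x)=\min_{i=1,\dots,p}\bar J_i(x)$ for all $x\in X$. Then: (a) For all $x\in X$, $$\min_{u\in U(x)}\big\{g(x,u)+(T^{\ell-1}\bar J)(f(x,u))\big\}=\min_{i=1,\dots,p}\Big[\min_{u\in U(x)}\big\{g(x,u)+(T^{\ell-1}\bar J_i)(f(x,u))\big\}\Big],$$ equivalently $(T^\ell\bar J)(x)=\min_{i=1,\dots,p}(T^\ell\bar J_i)(x)$. (b) For all $x\in X$, $\tilde U(T^{\ell-1}\bar J,x)=\bigcup_{i\in\tilde I(\ell,x)}\tilde U(T^{\ell-1}\bar J_i,x)$, where $\tilde I(\ell,x)=\arg\min_{i=1,\dots,p}(T^\ell\bar J_i)(x)$.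
   Context: Setting: $X$ (state space) and $U$ (control space) are sets; for each $x\in X$, $U(x)\subset U$ is nonempty; $f:X\times U\to X$; the stage cost $g$ satisfies $0\le g(x,u)\le\infty$ for all $x\in X$, $u\in U(x)$. $\mathcal{E}^+(X)$ denotes the set of all functions $J:X\to[0,\infty]$. The Bellman operator $T:\mathcal{E}^+(X)\to\mathcal{E}^+(X)$ is $(TJ)(x)=\inf_{u\in U(x)}\{g(x,u)+J(f(x,u))\}$; $T^\ell$ is its $\ell$-fold composition, with $T^0J=J$. Standing assumption: for every $J\in\mathcal{E}^+(X)$ and every $x\in X$, the infimum defining $(TJ)(x)$ is attained. For $J\in\mathcal{E}^+(X)$ and $x\in X$, $\tilde U(J,x)=\arg\min_{u\in U(x)}\{g(x,u)+J(f(x,u))\}$. *)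

(* costs take values in the extended reals \bar R,
   functions of E^+(X) are J : X -> \bar R with 0 <= J x. *)
From HB Require Import structures.
From mathcomp Require Import all_boot all_order all_algebra.
From mathcomp Require Import all_classical all_reals ereal.
Set Implicit Arguments. Unset Strict Implicit. Unset Printing Implicit Defensive.
Import Order.TTheory GRing.Theory Num.Theory.
Local Open Scope classical_set_scope.
Local Open Scope ereal_scope.

Definition bellman (R : realType) (X U : Type) (Uc : X -> set U)
  (f : X -> U -> X) (g : X -> U -> \bar R) (J : X -> \bar R) : X -> \bar R :=
  fun x => ereal_inf [set g x u + J (f x u) | u in Uc x].

Definition Utilde (R : realType) (X U : Type) (Uc : X -> set U)
  (f : X -> U -> X) (g : X -> U -> \bar R) (J : X -> \bar R) (x : X) : set U :=
  [set u | Uc x u /\ g x u + J (f x u) = bellman Uc f g J x].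

Definition nonneg_fun (R : realType) (X : Type) (J : X -> \bar R) : Prop :=
  forall x, 0 <= J x.

Definition minI (R : realType) (p : nat) (a : 'I_p -> \bar R) : \bar R :=
  \big[mine/+oo]_(i < p) a i.

From HB Require Import structures.
From mathcomp Require Import all_boot all_order all_algebra.
From mathcomp Require Import all_classical all_reals ereal.
Import Order.TTheory GRing.Theory Num.Theory.
Local Open Scope classical_set_scope.
Local Open Scope ereal_scope.

(* The Bellman operator commutes with pointwise minima of finitely many cost
   functions: for each control u, the minimum over i of g(x,u) + J_i(f(x,u))
   is attained at some i, so exchanging the infimum over u with the minimum
   over i is legitimate.  Iterating gives T^l (min_i J_i) = min_i T^l J_i, and
   a control is optimal for the minimum exactly when it is optimal for one of
   the J_i realising the minimum of the T J_i at x. *)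

Section MinI.
Context {R : realType} {p : nat}.
Implicit Types a : 'I_p -> \bar R.

Lemma minI_le a i : minI a <= a i.
Proof. exact: bigmin_le. Qed.

Lemma le_minI a c : (forall i, c <= a i) -> c <= minI a.
Proof. by move=> le_c; apply: le_bigmin => //; rewrite leey. Qed.

Lemma minI_attained a : (0 < p)%N -> exists i, minI a = a i.
Proof.
move=> p_gt0; rewrite /minI.
have [i _ ->] := @eq_bigmin _ _ _ +oo (Ordinal p_gt0) xpredT a isT
  (fun i _ => leey (a i)).
by exists i.
Qed.

End MinI.

Section BellmanMinI.
Variables (R : realType) (X U : Type) (Uc : X -> set U).
Variables (f : X -> U -> X) (g : X -> U -> \bar R).
Local Notation T := (bellman Uc f g).

Lemma bellman_le J {x u} : Uc x u -> T J x <= g x u + J (f x u).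
Proof. by move=> Uxu; apply: ereal_inf_lbound; exists u. Qed.

Lemma bellman_ge J x c : (forall u, Uc x u -> c <= g x u + J (f x u)) ->
  c <= T J x.
Proof. by move=> le_c; apply: le_ereal_inf_tmp => _ [u Uxu <-]; apply: le_c. Qed.

Variables (p : nat) (p_gt0 : (0 < p)%N).
Implicit Type K : 'I_p -> X -> \bar R.

Lemma bellman_minI K x :
  T (fun y => minI (fun i => K i y)) x = minI (fun i => T (K i) x).
Proof.
apply/eqP; rewrite eq_le; apply/andP; split.
- apply: le_minI => i; apply: bellman_ge => u Uxu.
  by apply: le_trans (bellman_le _ Uxu) _; apply: leeD2l; apply: minI_le.
- apply: bellman_ge => u Uxu.
  have [j ->] := minI_attained (fun i => K i (f x u)) p_gt0.
  by apply: le_trans (minI_le _ j) _; apply: bellman_le.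
Qed.

Lemma iter_bellman_minI K n :
  iter n T (fun y => minI (fun i => K i y)) =
  fun y => minI (fun i => iter n T (K i) y).
Proof.
elim: n => [//|n IHn]; apply: funext => x /=.
by rewrite IHn; apply: bellman_minI.
Qed.

Lemma Utilde_minI K x :
  Utilde Uc f g (fun y => minI (fun i => K i y)) x =
  \bigcup_(i in [set i | T (K i) x = minI (fun j => T (K j) x)])
    Utilde Uc f g (K i) x.
Proof.
rewrite /Utilde bellman_minI; apply/seteqP; split.
- move=> u [Uxu opt_u].
  have [j Kj_min] := minI_attained (fun i => K i (f x u)) p_gt0.
  rewrite Kj_min in opt_u.
  have Tj_min : T (K j) x = minI (fun i => T (K i) x).
    apply/eqP; rewrite eq_le minI_le andbT -opt_u.
    exact: bellman_le.
  by exists j => //; split; rewrite ?Tj_min.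
- move=> u [i /= Ti_min [Uxu opt_u]]; split => //.
  apply/eqP; rewrite eq_le; apply/andP; split.
  + by rewrite -Ti_min -opt_u; apply: leeD2l; apply: minI_le.
  + by rewrite -bellman_minI; apply: bellman_le.
Qed.

End BellmanMinI.

Theorem corollary1 (R : realType) (X U : Type) (Uc : X -> set U)
  (f : X -> U -> X) (g : X -> U -> \bar R)
  (HU : forall x, Uc x !=set0)
  (Hg : forall x u, Uc x u -> 0 <= g x u)
  (Hatt : forall J : X -> \bar R, nonneg_fun J ->
     forall x, exists2 u, Uc x u & g x u + J (f x u) = bellman Uc f g J x)
  (p l : nat) (Hp : (0 < p)%N) (Hl : (0 < l)%N)
  (Jb : 'I_p -> X -> \bar R) (HJb : forall i, nonneg_fun (Jb i))
  (Jbar : X -> \bar R) (HJbar : forall x, Jbar x = minI (fun i => Jb i x)) :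
  let T := bellman Uc f g in
  (forall x,
     T (iter l.-1 T Jbar) x = minI (fun i => T (iter l.-1 T (Jb i)) x)
     /\ iter l T Jbar x = minI (fun i => iter l T (Jb i) x)) /\
  (forall x,
     let Itilde : set 'I_p :=
       [set i | iter l T (Jb i) x = minI (fun j => iter l T (Jb j) x)] in
     Utilde Uc f g (iter l.-1 T Jbar) x =
       \bigcup_(i in Itilde) Utilde Uc f g (iter l.-1 T (Jb i)) x).
Proof.
move=> T; rewrite {}/T.
have -> : Jbar = fun y => minI (fun i => Jb i y) by apply: funext.
case: l Hl => // l _ /=; rewrite iter_bellman_minI //.
split=> x; first by rewrite bellman_minI.
exact: Utilde_minI.
Qed.
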